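(* Every non-isotropic vector $\alpha\in A_N$ (i.e. $q_N(\alpha)=1$) is represented by $(r+\rho(r))/2\bmod N$ for a suitable $r\in N$ with $r^2=-2$.
   Context: Lattices: $U$ has Gram matrix $\begin{pmatrix}0&1\\1&0\end{pmatrix}$; $D_4$ negative definite; $U(2)$ is $U$ with doubled form. $N=U\oplus U(2)\oplus D_4\oplus D_4$, $A_N=N^*/N\cong\mathbb F_2^6$, $q_N:A_N\to\mathbb Z/2\mathbb Z$, $q_N(x)=\langle x,x\rangle\bmod2\mathbb Z$ (values lie in $\mathbb Z/2\mathbb Z$). $\rho=\rho_1\oplus\rho_0\oplus\rho_0\in O(N)$, where for $D_4=\{x\in\mathbb Z^4:\sum x_i\equiv0\bmod 2\}$ (negative standard inner product) $\rho_0(x_1,x_2,x_3,x_4)=(x_2,-x_1,x_4,-x_3)$, and for standard hyperbolic bases $e,f$ of $U$, $e',f'$ of $U(2)$, $\rho_1(e)=-e-e'$, $\rho_1(f)=f-f'$, $\rho_1(e')=e'+2e$, $\rho_1(f')=2f-f'$. For $r\in N$, $r^2=-2$, one has $(r+\rho(r))/2\in N^*$. *)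

From HB Require Import structures.
From mathcomp Require Import all_boot all_order all_algebra.
Set Implicit Arguments. Unset Strict Implicit. Unset Printing Implicit Defensive.
Import Order.TTheory GRing.Theory Num.Theory.
Local Open Scope ring_scope.

(* N = U (+) U(2) (+) D4 (+) D4, realised inside Q^12 (row vectors).
   Coordinates: 0 -> e, 1 -> f (basis of U); 2 -> e', 3 -> f' (basis of U(2));
   4..7 -> first D4 (standard coordinates of Z^4); 8..11 -> second D4. *)
Definition lat_vec := 'rV[rat]_12.

Definition lat_gram : 'M[rat]_12 :=
  \matrix_(i < 12, j < 12)
    (if ((i == 0%N :> nat) && (j == 1%N :> nat)) || ((i == 1%N :> nat) && (j == 0%N :> nat)) then 1
     else if ((i == 2%N :> nat) && (j == 3%N :> nat)) || ((i == 3%N :> nat) && (j == 2%N :> nat)) then 2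
     else if (4 <= i)%N && (i == j) then -1
     else 0).

Definition lat_form (x y : lat_vec) : rat := (x *m lat_gram *m y^T) 0 0.

Definition lat_coord (x : lat_vec) (k : nat) : rat := x 0 (inord k).

Definition inN (x : lat_vec) : Prop :=
  (forall i : 'I_12, x 0 i \is a Num.int) /\
  ((lat_coord x 4 + lat_coord x 5 + lat_coord x 6 + lat_coord x 7) / 2 \is a Num.int) /\
  ((lat_coord x 8 + lat_coord x 9 + lat_coord x 10 + lat_coord x 11) / 2 \is a Num.int).

Definition inNdual (x : lat_vec) : Prop :=
  forall y : lat_vec, inN y -> lat_form x y \is a Num.int.

(* q_N(x) = <x,x> mod 2Z equals 1, for x in the dual lattice *)
Definition qN_is_one (x : lat_vec) : Prop :=
  exists k : int, lat_form x x = (2 * k + 1)%:~R.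

Definition lat_rho (x : lat_vec) : lat_vec :=
  \row_(i < 12)
    match nat_of_ord i with
    | 0 => - lat_coord x 0 + 2 * lat_coord x 2
    | 1 => lat_coord x 1 + 2 * lat_coord x 3
    | 2 => - lat_coord x 0 + lat_coord x 2
    | 3 => - lat_coord x 1 - lat_coord x 3
    | 4 => lat_coord x 5
    | 5 => - lat_coord x 4
    | 6 => lat_coord x 7
    | 7 => - lat_coord x 6
    | 8 => lat_coord x 9
    | 9 => - lat_coord x 8
    | 10 => lat_coord x 11
    | 11 => - lat_coord x 10
    | _ => 0
    end.

From HB Require Import structures.
From mathcomp Require Import all_boot all_order all_algebra.
From mathcomp Require Import ring.
Import Order.TTheory GRing.Theory Num.Theory.
Local Open Scope ring_scope.

(* A vector a of N^* has a_0, a_1, 2a_2, 2a_3 integral, and each D4 block of a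
   lies in D4^*.  Take r = 2a_2 e - 2a_3 f + m e' + f' plus, in each D4 block
   (x, y, z, w), the vector (x - y, x + y, z - w, z + w).  On the D4 blocks
   (r + rho r)/2 is exactly a, and on U (+) U(2) it differs from a by an
   element of N for every integer m.  Finally r^2 = 2 a^2 + 4 (m - a_0 a_1 -
   4 a_2 a_3), and since a^2 is odd, m can be chosen to make r^2 = -2. *)

Local Notation c := lat_coord.

Lemma lat_coordE (x : lat_vec) (i : 'I_12) : x 0 i = c x i.
Proof. by rewrite /lat_coord inord_val. Qed.

Lemma lat_vecP (x y : lat_vec) :
  (forall k, (k < 12)%N -> c x k = c y k) -> x = y.
Proof. by move=> xy; apply/rowP => i; rewrite !lat_coordE xy. Qed.

Definition lat_gram_entry (i j : nat) : rat :=
  if ((i == 0%N) && (j == 1%N)) || ((i == 1%N) && (j == 0%N)) then 1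
  else if ((i == 2%N) && (j == 3%N)) || ((i == 3%N) && (j == 2%N)) then 2
  else if (4 <= i)%N && (i == j) then -1
  else 0.

Lemma lat_form_sum (x y : lat_vec) : lat_form x y =
  \sum_(0 <= j < 12) (\sum_(0 <= i < 12) c x i * lat_gram_entry i j) * c y j.
Proof.
rewrite /lat_form !mxE big_mkord; apply: eq_bigr => j _.
rewrite !mxE lat_coordE big_mkord; congr (_ * _); apply: eq_bigr => i _.
by rewrite !mxE lat_coordE.
Qed.

Lemma lat_formE (x y : lat_vec) : lat_form x y =
  c x 0 * c y 1 + c x 1 * c y 0 + 2 * (c x 2 * c y 3 + c x 3 * c y 2)
  - (c x 4 * c y 4 + c x 5 * c y 5 + c x 6 * c y 6 + c x 7 * c y 7
   + c x 8 * c y 8 + c x 9 * c y 9 + c x 10 * c y 10 + c x 11 * c y 11).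
Proof.
rewrite lat_form_sum /index_iota /= !big_cons !big_nil /lat_gram_entry /=.
rewrite !(mul0r, mulr0, add0r, addr0, mulr1); ring.
Qed.

Lemma lat_coord_rho (x : lat_vec) (k : nat) : (k < 12)%N -> c (lat_rho x) k =
  match k with
  | 0 => - c x 0 + 2 * c x 2
  | 1 => c x 1 + 2 * c x 3
  | 2 => - c x 0 + c x 2
  | 3 => - c x 1 - c x 3
  | 4 => c x 5
  | 5 => - c x 4
  | 6 => c x 7
  | 7 => - c x 6
  | 8 => c x 9
  | 9 => - c x 8
  | 10 => c x 11
  | 11 => - c x 10
  | _ => 0
  end.
Proof. by move=> lt_k12; rewrite {1}/lat_coord mxE inordK. Qed.

Definition lat_vec_of_seq (s : seq rat) : lat_vec := \row_(i < 12) nth 0 s i.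

Lemma lat_coord_of_seq (s : seq rat) (k : nat) :
  (k < 12)%N -> c (lat_vec_of_seq s) k = nth 0 s k.
Proof. by move=> lt_k12; rewrite /lat_coord mxE inordK. Qed.

Lemma inN_of_seq (s : seq rat) :
  all (fun q => q \is a Num.int) s ->
  (nth 0 s 4 + nth 0 s 5 + nth 0 s 6 + nth 0 s 7) / 2 \is a Num.int ->
  (nth 0 s 8 + nth 0 s 9 + nth 0 s 10 + nth 0 s 11) / 2 \is a Num.int ->
  inN (lat_vec_of_seq s).
Proof.
move=> /all_nthP s_int D4s_1 D4s_2; rewrite /inN !lat_coord_of_seq //.
split=> // i; rewrite lat_coordE lat_coord_of_seq //.
by case: (ltnP i (size s)) => [/s_int | /(nth_default 0) ->].
Qed.

Lemma inNdual_eval (a : lat_vec) (s : seq rat) (q : rat) :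
  inNdual a -> inN (lat_vec_of_seq s) -> lat_form a (lat_vec_of_seq s) = q ->
  q \is a Num.int.
Proof. by move=> a_dual s_N <-; apply: a_dual. Qed.

(* (x, y, z, w) pairs integrally with the generators e1 +- e2, e3 +- e4,
   e1 + e3 of D4, i.e. lies in the dual lattice D4^*. *)
Definition D4_dual_coords (x y z w : rat) : bool :=
  [&& x + y \is a Num.int, x - y \is a Num.int, z + w \is a Num.int,
      z - w \is a Num.int & x + z \is a Num.int].

Section DualLattice.

Variable a : lat_vec.
Hypothesis a_dual : inNdual a.

Local Ltac pair_with s :=
  apply: (@inNdual_eval a s _ a_dual);
  [by apply: inN_of_seq | by rewrite lat_formE !lat_coord_of_seq //=; ring].

Lemma inNdual_hyperbolic : [/\ c a 0 \is a Num.int, c a 1 \is a Num.int,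
  2 * c a 2 \is a Num.int & 2 * c a 3 \is a Num.int].
Proof.
split; [pair_with [:: 0; 1 : rat] | pair_with [:: 1 : rat]
       | pair_with [:: 0; 0; 0; 1 : rat] | pair_with [:: 0; 0; 1 : rat]].
Qed.

Lemma inNdual_D4 : D4_dual_coords (c a 4) (c a 5) (c a 6) (c a 7) /\
                   D4_dual_coords (c a 8) (c a 9) (c a 10) (c a 11).
Proof.
(* The test vectors are negated to cancel the sign of the D4 form. *)
split; apply/and5P; split.
- pair_with [:: 0; 0; 0; 0; -1; -1 : rat].
- pair_with [:: 0; 0; 0; 0; -1; 1 : rat].
- pair_with [:: 0; 0; 0; 0; 0; 0; -1; -1 : rat].
- pair_with [:: 0; 0; 0; 0; 0; 0; -1; 1 : rat].
- pair_with [:: 0; 0; 0; 0; -1; 0; -1 : rat].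
- pair_with [:: 0; 0; 0; 0; 0; 0; 0; 0; -1; -1 : rat].
- pair_with [:: 0; 0; 0; 0; 0; 0; 0; 0; -1; 1 : rat].
- pair_with [:: 0; 0; 0; 0; 0; 0; 0; 0; 0; 0; -1; -1 : rat].
- pair_with [:: 0; 0; 0; 0; 0; 0; 0; 0; 0; 0; -1; 1 : rat].
- pair_with [:: 0; 0; 0; 0; 0; 0; 0; 0; -1; 0; -1 : rat].
Qed.

End DualLattice.

Lemma D4_dual_lift_sum (x y z w : rat) : D4_dual_coords x y z w ->
  ((x - y) + (x + y) + (z - w) + (z + w)) / 2 \is a Num.int.
Proof.
case/and5P=> _ _ _ _ xz_int.
by rewrite (_ : _ / 2 = x + z) //; field.
Qed.

Definition lift_root (a : lat_vec) (m : rat) : lat_vec :=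
  lat_vec_of_seq [:: 2 * c a 2; - (2 * c a 3); m; 1;
    c a 4 - c a 5; c a 4 + c a 5; c a 6 - c a 7; c a 6 + c a 7;
    c a 8 - c a 9; c a 8 + c a 9; c a 10 - c a 11; c a 10 + c a 11].

Lemma inN_lift_root (a : lat_vec) (m : rat) :
  inNdual a -> m \is a Num.int -> inN (lift_root a m).
Proof.
move=> a_dual m_int; have [_ _ a2_int a3_int] := inNdual_hyperbolic _ a_dual.
have [D4_1 D4_2] := inNdual_D4 _ a_dual.
apply: inN_of_seq => /=; [|exact: D4_dual_lift_sum D4_1|exact: D4_dual_lift_sum D4_2].
case/and5P: D4_1 => -> -> -> -> _; case/and5P: D4_2 => -> -> -> -> _.
by rewrite a2_int rpredN a3_int m_int.
Qed.

Lemma lift_root_norm (a : lat_vec) (m : rat) :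
  lat_form (lift_root a m) (lift_root a m) =
  2 * lat_form a a + 4 * (m - c a 0 * c a 1 - (2 * c a 2) * (2 * c a 3)).
Proof. by rewrite !lat_formE !lat_coord_of_seq //=; ring. Qed.

Lemma lat_coord_half_sub (u v w : lat_vec) (k : nat) :
  c (2%:R^-1 *: (u + v) - w) k = 2^-1 * (c u k + c v k) - c w k.
Proof. by rewrite /lat_coord !mxE. Qed.

Lemma lift_root_half_sub (a : lat_vec) (m : rat) :
  2%:R^-1 *: (lift_root a m + lat_rho (lift_root a m)) - a =
  lat_vec_of_seq [:: m - c a 0; 1 - c a 1 - 2 * c a 3; m - 2 * c a 2].
Proof.
apply: lat_vecP => k lt_k12.
rewrite lat_coord_half_sub lat_coord_rho // lat_coord_of_seq //.
do 12?[case: k lt_k12 => [_ | k lt_k12]; first by rewrite !lat_coord_of_seq //=; field].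
by [].
Qed.

Lemma inN_lift_root_residue (a : lat_vec) (m : rat) :
  inNdual a -> m \is a Num.int ->
  inN (2%:R^-1 *: (lift_root a m + lat_rho (lift_root a m)) - a).
Proof.
move=> a_dual m_int; have [a0_int a1_int a2_int a3_int] := inNdual_hyperbolic _ a_dual.
rewrite lift_root_half_sub; apply: inN_of_seq => //=.
by rewrite !rpredB ?rpred1.
Qed.

Theorem lemma4p6 :
  forall a : lat_vec, inNdual a -> qN_is_one a ->
  exists r : lat_vec, inN r /\ lat_form r r = -2 /\
    inN ((2%:R)^-1 *: (r + lat_rho r) - a).
Proof.
move=> a a_dual [k a_norm].
have [a0_int a1_int a2_int a3_int] := inNdual_hyperbolic _ a_dual.
pose m := c a 0 * c a 1 + (2 * c a 2) * (2 * c a 3) - (k + 1)%:~R.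
have m_int : m \is a Num.int.
  by rewrite /m rpredB ?intr_int // rpredD // rpredM.
exists (lift_root a m); split; [exact: inN_lift_root | split].
- by rewrite lift_root_norm a_norm /m !intrD intrM; ring.
- exact: inN_lift_root_residue.
Qed.
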